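(* For every $r>0$, every nonzero $\vec\theta\in\mathbb C^m$ and every $N\ge0$, there exists $\eta\in\mathrm{Sqz}^m$ such that \[{}^t(G_\eta\vec\mu_{\vec\theta})\,\Sigma_{\eta,N}^{-1}\,(G_\eta\vec\mu_{\vec\theta})=\frac{4r^2\|\vec\theta\|^2}{(2N+1)r^2+1}.\]
   Context: $\mathrm{Sqz}^m$ is the set of complex $2m\times2m$ matrices $\eta=\begin{pmatrix}A&S\\ \bar S&\bar A\end{pmatrix}$ with $A\in\mathbb C^{m\times m}$ anti-hermitian ($A^*=-A$) and $S\in\mathbb C^{m\times m}$ symmetric. For $\vec\theta\in\mathbb C^m$, $\vec\mu_{\vec\theta}=({}^t\mathrm{Re}\,\vec\theta,{}^t\mathrm{Im}\,\vec\theta)^t\in\mathbb R^{2m}$. Further \[G_\eta=\exp\begin{pmatrix}\mathrm{Re}A+\mathrm{Re}S&-\mathrm{Im}A+\mathrm{Im}S\\ \mathrm{Im}A+\mathrm{Im}S&\mathrm{Re}A-\mathrm{Re}S\end{pmatrix},\qquad \Sigma_{\eta,N}=\frac{2N+1}{4}G_\eta\,{}^tG_\eta+\frac14I_{2m}.\] *)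

From HB Require Import structures.
From mathcomp Require Import all_boot all_order all_algebra.
From mathcomp Require Import all_classical all_reals all_analysis.
From mathcomp Require Import complex.
Set Implicit Arguments. Unset Strict Implicit. Unset Printing Implicit Defensive.
Import Order.TTheory GRing.Theory Num.Theory.
Local Open Scope ring_scope.

Definition reC (R : Type) (z : R[i]) : R := complex.Re z.
Definition imC (R : Type) (z : R[i]) : R := complex.Im z.

Section Defs.
Variable R : realType.

Definition Remx (m n : nat) (M : 'M[R[i]]_(m, n)) : 'M[R]_(m, n) :=
  map_mx (@reC R) M.
Definition Immx (m n : nat) (M : 'M[R[i]]_(m, n)) : 'M[R]_(m, n) :=
  map_mx (@imC R) M.
Definition conjmx (m n : nat) (M : 'M[R[i]]_(m, n)) : 'M[R[i]]_(m, n) :=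
  map_mx (@conjc R) M.

Definition expmx (n : nat) (M : 'M[R]_n) : 'M[R]_n :=
  limn (series (fun k : nat => k`!%:R^-1 *: M ^+ k)).

Definition antihermitian (m : nat) (A : 'M[R[i]]_m) : Prop :=
  conjmx A^T = - A.
Definition symmetricmx (m : nat) (S : 'M[R[i]]_m) : Prop := S^T = S.

Definition Sqz (m : nat) (eta : 'M[R[i]]_(m + m)) : Prop :=
  exists A S : 'M[R[i]]_m, antihermitian A /\ symmetricmx S /\
    eta = block_mx A S (conjmx S) (conjmx A).

Definition mu_vec (m : nat) (theta : 'cV[R[i]]_m) : 'cV[R]_(m + m) :=
  col_mx (Remx theta) (Immx theta).

Definition G_eta (m : nat) (eta : 'M[R[i]]_(m + m)) : 'M[R]_(m + m) :=
  let A := ulsubmx eta in let S := ursubmx eta in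
  expmx (block_mx (Remx A + Remx S) (- Immx A + Immx S)
                  (Immx A + Immx S) (Remx A - Remx S)).

Definition Sigma_eta (m : nat) (eta : 'M[R[i]]_(m + m)) (N : R) : 'M[R]_(m + m) :=
  ((2 * N + 1) / 4) *: (G_eta eta *m (G_eta eta)^T) + (1 / 4) *: 1%:M.

Definition normC2 (m : nat) (theta : 'cV[R[i]]_m) : R :=
  \sum_i (reC (theta i 0) ^+ 2 + imC (theta i 0) ^+ 2).

Definition quadform (n : nat) (M : 'M[R]_n) (v : 'cV[R]_n) : R :=
  (v^T *m M *m v) 0 0.
End Defs.

From Pilot Require Import Defs.
From HB Require Import structures.
From mathcomp Require Import all_boot all_order all_algebra.
From mathcomp Require Import all_classical all_reals all_analysis.
From mathcomp Require Import complex.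
From mathcomp Require Import ring lra.
Set Implicit Arguments. Unset Strict Implicit. Unset Printing Implicit Defensive.
Import Order.TTheory GRing.Theory Num.Theory.
Local Open Scope ring_scope.

(* Take A = 0 and S = (ln r / |theta|^2) theta theta^T.  The vectors v = mu_theta
   and w = mu_(i theta) are orthogonal of squared norm |theta|^2, and the real
   generator of G_eta is ln r (P - Q), where P and Q project orthogonally onto v
   and w.  Matrices x (1 - P - Q) + y P + z Q act by the scalars x, y, z on three
   complementary subspaces, so their exponentials, products and inverses are
   computed scalarwise: G_eta v = r v, and v is an eigenvector of Sigma_eta,N
   for the eigenvalue ((2N+1) r^2 + 1) / 4. *)

Section SpectralMatrix.
Variables (R : fieldType) (n : nat) (P Q : 'M[R]_n).
Hypotheses (PP : P *m P = P) (QQ : Q *m Q = Q) (PQ : P *m Q = 0) (QP : Q *m P = 0).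

Definition spectral_mx (x y z : R) : 'M[R]_n :=
  x *: (1%:M - P - Q) + y *: P + z *: Q.

Lemma spectral_mx1 : spectral_mx 1 1 1 = 1%:M.
Proof. by rewrite /spectral_mx !scale1r addrAC subrK subrK. Qed.

Lemma spectral_mxZ a x y z :
  a *: spectral_mx x y z = spectral_mx (a * x) (a * y) (a * z).
Proof. by rewrite /spectral_mx !scalerDr !scalerA. Qed.

Lemma spectral_mxD x y z x' y' z' :
  spectral_mx x y z + spectral_mx x' y' z' =
  spectral_mx (x + x') (y + y') (z + z').
Proof. by rewrite /spectral_mx !scalerDl addrACA; congr (_ + _); rewrite addrACA. Qed.

Lemma spectral_mx_sum (I : Type) (s : seq I) (x y z : I -> R) :
  \sum_(i <- s) spectral_mx (x i) (y i) (z i) =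
  spectral_mx (\sum_(i <- s) x i) (\sum_(i <- s) y i) (\sum_(i <- s) z i).
Proof. by rewrite /spectral_mx !big_split /= -!scaler_suml. Qed.

Lemma spectral_mxM x y z x' y' z' :
  spectral_mx x y z *m spectral_mx x' y' z' =
  spectral_mx (x * x') (y * y') (z * z').
Proof.
set K := 1%:M - P - Q.
have KK : K *m K = K.
  by rewrite !mulmxBl !mulmxBr !mul1mx !mulmx1 PP QQ PQ QP !subr0 !subrr !subr0.
have KP : K *m P = 0 by rewrite !mulmxBl mul1mx PP QP subrr subr0.
have KQ : K *m Q = 0 by rewrite !mulmxBl mul1mx QQ PQ subr0 subrr.
have PK : P *m K = 0 by rewrite !mulmxBr mulmx1 PP PQ subrr subr0.
have QK : Q *m K = 0 by rewrite !mulmxBr mulmx1 QQ QP subr0 subrr.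
rewrite /spectral_mx -/K !mulmxDl !mulmxDr -!scalemxAl -!scalemxAr.
by rewrite KK KP KQ PK QK PP QQ PQ QP !scaler0 !scalerA !addr0 !add0r.
Qed.

Lemma spectral_mxX x y z k :
  spectral_mx x y z ^+ k = spectral_mx (x ^+ k) (y ^+ k) (z ^+ k).
Proof.
elim: k => [|k IHk]; first by rewrite !expr0 spectral_mx1.
by rewrite exprS IHk [_ * _]spectral_mxM -!exprS.
Qed.

Lemma spectral_mx_inv x y z : x != 0 -> y != 0 -> z != 0 ->
  invmx (spectral_mx x y z) = spectral_mx x^-1 y^-1 z^-1.
Proof.
move=> x0 y0 z0.
have invE : spectral_mx x y z *m spectral_mx x^-1 y^-1 z^-1 = 1%:M.
  by rewrite spectral_mxM !divff // spectral_mx1.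
have [spec_unit _] := mulmx1_unit invE.
by rewrite -[LHS]mulmx1 -invE mulmxA mulVmx // mul1mx.
Qed.

Lemma spectral_mx_tr x y z : P^T = P -> Q^T = Q ->
  (spectral_mx x y z)^T = spectral_mx x y z.
Proof.
move=> Ptr Qtr.
have Psym i j : P j i = P i j by rewrite -[in RHS]Ptr mxE.
have Qsym i j : Q j i = Q i j by rewrite -[in RHS]Qtr mxE.
by apply/matrixP => i j; rewrite !mxE Psym Qsym eq_sym.
Qed.

Lemma spectral_mx_eigen (u : 'cV[R]_n) x y z : P *m u = u -> Q *m u = 0 ->
  spectral_mx x y z *m u = y *: u.
Proof.
move=> Pu Qu; rewrite /spectral_mx !mulmxDl -!scalemxAl !mulmxBl mul1mx Pu Qu.
by rewrite subrr subr0 !scaler0 add0r addr0.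
Qed.

End SpectralMatrix.

Section ExpSpectralMatrix.
Variables (R : realType) (n : nat) (P Q : 'M[R]_n).
Hypotheses (PP : P *m P = P) (QQ : Q *m Q = Q) (PQ : P *m Q = 0) (QP : Q *m P = 0).

Lemma expmx_spectral x y z :
  expmx (spectral_mx P Q x y z) = spectral_mx P Q (expR x) (expR y) (expR z).
Proof.
rewrite /expmx; apply: (cvg_lim (@norm_hausdorff _ _)).
have partial_sumE k :
    series (fun k : nat => k`!%:R^-1 *: spectral_mx P Q x y z ^+ k) k =
    spectral_mx P Q (series (exp_coeff x) k) (series (exp_coeff y) k)
                    (series (exp_coeff z) k).
  rewrite /series /=.
  under eq_bigr do rewrite (spectral_mxX PP QQ PQ QP) spectral_mxZ.
  by rewrite spectral_mx_sum; congr spectral_mx; apply: eq_bigr => i _; rewrite mulrC.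
rewrite (eq_cvg _ _ partial_sumE).
by apply: cvgD; first apply: cvgD; apply: cvgZr_tmp; apply: is_cvg_series_exp_coeff.
Qed.

End ExpSpectralMatrix.

Section RankOneProjector.
Variables (R : fieldType) (n : nat).
Implicit Types u w : 'cV[R]_n.

Definition dotv u w : R := (u^T *m w) 0 0.

Definition rank1_proj u : 'M[R]_n := (dotv u u)^-1 *: (u *m u^T).

Lemma dotvC u w : dotv u w = dotv w u.
Proof. by rewrite /dotv !mxE; apply: eq_bigr => k _; rewrite !mxE mulrC. Qed.

Lemma dotvNl u w : dotv (- u) w = - dotv u w.
Proof. by rewrite /dotv linearN /= mulNmx mxE. Qed.

Lemma rank1_proj_vec u w : rank1_proj u *m w = (dotv u w / dotv u u) *: u.
Proof.
rewrite /rank1_proj -scalemxAl -mulmxA [u^T *m w]mx11_scalar mul_mx_scalar.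
by rewrite scalerA mulrC.
Qed.

Lemma rank1_projK u : dotv u u != 0 -> rank1_proj u *m u = u.
Proof. by move=> uu; rewrite rank1_proj_vec divff // scale1r. Qed.

Lemma rank1_proj_orth u w : dotv u w = 0 -> rank1_proj u *m w = 0.
Proof. by move=> uw; rewrite rank1_proj_vec uw mul0r scale0r. Qed.

Lemma rank1_proj_idem u : dotv u u != 0 -> rank1_proj u *m rank1_proj u = rank1_proj u.
Proof. by move=> uu; rewrite [X in _ *m X]/rank1_proj -scalemxAr mulmxA rank1_projK. Qed.

Lemma rank1_proj_mul_orth u w : dotv u w = 0 -> rank1_proj u *m rank1_proj w = 0.
Proof.
move=> uw; rewrite [X in _ *m X]/rank1_proj -scalemxAr mulmxA rank1_proj_orth //.
by rewrite mul0mx scaler0.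
Qed.

Lemma rank1_proj_tr u : (rank1_proj u)^T = rank1_proj u.
Proof. by rewrite /rank1_proj linearZ /= trmx_mul trmxK. Qed.

End RankOneProjector.

Lemma dotv_col_mx (R : fieldType) n1 n2 (u1 w1 : 'cV[R]_n1) (u2 w2 : 'cV[R]_n2) :
  dotv (col_mx u1 u2) (col_mx w1 w2) = dotv u1 w1 + dotv u2 w2.
Proof. by rewrite /dotv tr_col_mx mul_row_col mxE. Qed.

Section QuadraticForm.
Variables (R : realType) (n : nat).
Implicit Types (M : 'M[R]_n) (u : 'cV[R]_n).

Lemma quadformZ M a u : quadform M (a *: u) = a ^+ 2 * quadform M u.
Proof.
by rewrite /quadform !linearZ /= -!scalemxAl !mxE mulrA expr2.
Qed.

Lemma quadform_eigen M u y : M *m u = y *: u -> quadform M u = y * dotv u u.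
Proof. by move=> Mu; rewrite /quadform -mulmxA Mu -scalemxAr mxE. Qed.

End QuadraticForm.

Section MuVectors.
Variables (R : realType) (m : nat).
Implicit Types theta : 'cV[R[i]]_m.

(* mu_perp theta is mu_vec of i * theta. *)
Definition mu_perp theta : 'cV[R]_(m + m) := col_mx (- Immx theta) (Remx theta).

Lemma dotv_mu_vec theta : dotv (mu_vec theta) (mu_vec theta) = normC2 theta.
Proof.
rewrite dotv_col_mx /normC2 big_split /=.
by congr (_ + _); rewrite /dotv mxE; apply: eq_bigr => k _; rewrite !mxE expr2.
Qed.

Lemma dotv_mu_perp theta : dotv (mu_perp theta) (mu_perp theta) = normC2 theta.
Proof.
by rewrite dotv_col_mx dotvNl dotvC dotvNl opprK addrC -dotv_col_mx dotv_mu_vec.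
Qed.

Lemma dotv_mu_vec_perp theta : dotv (mu_vec theta) (mu_perp theta) = 0.
Proof. by rewrite dotv_col_mx dotvC dotvNl [dotv (Immx _) _]dotvC addNr. Qed.

Lemma normC2_gt0 theta : theta != 0 -> 0 < normC2 theta.
Proof.
move=> theta_nz.
have term_ge0 k : 0 <= reC (theta k 0) ^+ 2 + imC (theta k 0) ^+ 2.
  by rewrite addr_ge0 // sqr_ge0.
rewrite lt_neqAle sumr_ge0 ?andbT //.
apply: contra theta_nz => /eqP/esym/psumr_eq0P normC2_eq0.
apply/eqP/matrixP => k j; rewrite ord1 mxE.
have /eqP := normC2_eq0 (fun k _ => term_ge0 k) k isT.
rewrite paddr_eq0 ?sqr_ge0 // !sqrf_eq0 /reC /imC.
by case: (theta k 0) => x y /= /andP[/eqP-> /eqP->].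
Qed.

End MuVectors.

Section Squeezing.
Variables (R : realType) (m : nat).

Definition squeeze_mx (S : 'M[R[i]]_m) : 'M[R[i]]_(m + m) :=
  block_mx 0 S (Defs.conjmx S) 0.

Lemma Sqz_squeeze_mx S : Defs.symmetricmx S -> Sqz (squeeze_mx S).
Proof.
move=> S_sym; have conj0 : Defs.conjmx (0 : 'M[R[i]]_m) = 0.
  by apply/matrixP => i j; rewrite !mxE conjc0.
by exists 0, S; rewrite /antihermitian trmx0 conj0 oppr0.
Qed.

Lemma G_eta_squeeze_mx S :
  G_eta (squeeze_mx S) = expmx (block_mx (Remx S) (Immx S) (Immx S) (- Remx S)).
Proof.
have Re0 : Remx (0 : 'M[R[i]]_m) = 0 by apply/matrixP => i j; rewrite !mxE.
have Im0 : Immx (0 : 'M[R[i]]_m) = 0 by apply/matrixP => i j; rewrite !mxE.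
by rewrite /G_eta block_mxKul block_mxKur Re0 Im0 oppr0 !add0r.
Qed.

Definition sqz_along (s : R) (theta : 'cV[R[i]]_m) : 'M[R[i]]_m :=
  Complex (s / normC2 theta) 0 *: (theta *m theta^T).

Lemma sqz_along_sym s theta : Defs.symmetricmx (sqz_along s theta).
Proof. by rewrite /Defs.symmetricmx /sqz_along linearZ /= trmx_mul trmxK. Qed.

Lemma sqz_along_generator s theta (S := sqz_along s theta) :
  block_mx (Remx S) (Immx S) (Immx S) (- Remx S) =
  s *: (rank1_proj (mu_vec theta) - rank1_proj (mu_perp theta)).
Proof.
rewrite /S /rank1_proj dotv_mu_vec dotv_mu_perp /mu_vec /mu_perp.
rewrite !tr_col_mx !mul_col_row !linearN /= scalerBr !scale_block_mx.
rewrite opp_block_mx add_block_mx.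
congr block_mx; apply/matrixP => i j; rewrite !mxE !big_ord1 !mxE /reC /imC;
  case: (theta i 0) => x1 y1; case: (theta j 0) => x2 y2 /=; ring.
Qed.

End Squeezing.

Section SqueezingAlongTheta.
Variables (R : realType) (m : nat) (theta : 'cV[R[i]]_m).
Hypothesis theta_nz : theta != 0.

Let P := rank1_proj (mu_vec theta).
Let Q := rank1_proj (mu_perp theta).

Let mu_vec_neq0 : dotv (mu_vec theta) (mu_vec theta) != 0.
Proof. by rewrite dotv_mu_vec gt_eqF // normC2_gt0. Qed.
Let mu_perp_neq0 : dotv (mu_perp theta) (mu_perp theta) != 0.
Proof. by rewrite dotv_mu_perp gt_eqF // normC2_gt0. Qed.
Let mu_perp_vec : dotv (mu_perp theta) (mu_vec theta) = 0.
Proof. by rewrite dotvC dotv_mu_vec_perp. Qed.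

Let PP : P *m P = P := rank1_proj_idem mu_vec_neq0.
Let QQ : Q *m Q = Q := rank1_proj_idem mu_perp_neq0.
Let PQ : P *m Q = 0 := rank1_proj_mul_orth (dotv_mu_vec_perp theta).
Let QP : Q *m P = 0 := rank1_proj_mul_orth mu_perp_vec.

Lemma G_eta_sqz_along r : 0 < r ->
  G_eta (squeeze_mx (sqz_along (ln r) theta)) = spectral_mx P Q 1 r r^-1.
Proof.
move=> r_gt0; rewrite G_eta_squeeze_mx sqz_along_generator -/P -/Q.
have -> : ln r *: (P - Q) = spectral_mx P Q 0 (ln r) (- ln r).
  by rewrite /spectral_mx scale0r add0r scalerBr scaleNr.
by rewrite expmx_spectral // expR0 expRN lnK.
Qed.

Lemma quadform_Sigma_eta_sqz_along r N (E := squeeze_mx (sqz_along (ln r) theta)) :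
  0 < r -> 0 <= N ->
  quadform (invmx (Sigma_eta E N)) (G_eta E *m mu_vec theta) =
  4 * r ^+ 2 * normC2 theta / ((2 * N + 1) * r ^+ 2 + 1).
Proof.
move=> r_gt0 N_ge0.
have Pv : P *m mu_vec theta = mu_vec theta := rank1_projK mu_vec_neq0.
have Qv : Q *m mu_vec theta = 0 := rank1_proj_orth mu_perp_vec.
have eigen_nz t : 0 <= t -> (2 * N + 1) / 4 * t + 1 / 4 * 1 != 0.
  by move=> t_ge0; rewrite gt_eqF // ltr_pwDr ?mulr_ge0 //; lra.
rewrite /Sigma_eta /E G_eta_sqz_along // spectral_mx_tr ?rank1_proj_tr //.
rewrite spectral_mxM // -(spectral_mx1 P Q) !spectral_mxZ spectral_mxD.
rewrite spectral_mx_inv ?eigen_nz ?mulr_ge0 ?invr_ge0 ?ltW //.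
rewrite spectral_mx_eigen // quadformZ.
rewrite (quadform_eigen (spectral_mx_eigen _ _ _ Pv Qv)) dotv_mu_vec.
by field; rewrite gt_eqF // addr_gt0 // mulr_gt0 ?exprn_gt0 //; lra.
Qed.

End SqueezingAlongTheta.

Theorem lemma31 (R : realType) (m : nat) (r : R) (theta : 'cV[R[i]]_m) (N : R) :
  0 < r -> theta != 0 -> 0 <= N ->
  exists eta : 'M[R[i]]_(m + m), Sqz eta /\
    quadform (invmx (Sigma_eta eta N)) (G_eta eta *m mu_vec theta)
    = 4 * r ^+ 2 * normC2 theta / ((2 * N + 1) * r ^+ 2 + 1).
Proof.
move=> r_gt0 theta_nz N_ge0.
exists (squeeze_mx (sqz_along (ln r) theta)); split.
  exact/Sqz_squeeze_mx/sqz_along_sym.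
exact: quadform_Sigma_eta_sqz_along.
Qed.
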